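(* Let $\triangle$ and $\square$ be the scenarios and $e$ the possibilistic model on $\triangle$ described in the context. There is no possibilistic empirical model $d$ on $\square$ and no possibilistic procedure $f\colon\square\to\triangle$ with $\mathrm{Emp}_{\mathbb B}(f)d\le e$. In particular, there is no probabilistic empirical model $d$ on $\square$ and probabilistic procedure $f\colon\square\to\triangle$ such that $\mathrm{Emp}(f)d$ equals the probabilistic model $e$.
   Context: A measurement scenario consists of a finite set of measurements, finite non-empty outcome sets $O_x$, and a simplicial complex of contexts (subsets containing $\emptyset$ and all singletons, closed under subsets); $\mathcal E(U)=\prod_{x\in U}O_x$. A simplicial relation $R$ from $\Sigma$ (on $X$) to $\Delta$ (on $Y$) is a relation $R\subseteq X\times Y$ with $R(\sigma)\in\Delta$ for all $\sigma\in\Sigma$. A deterministic procedure $f\colon S\to T$ is a pair $(\pi_f,\alpha_f)$, $\pi_f$ a simplicial relation from $\Sigma_T$ to $\Sigma_S$, $\alpha_{f,x}\colon\mathcal E_S(\pi_f(x))\to O_{T,x}$; probabilistic procedures are finitely supported probability distributions on deterministic ones, possibilistic procedures are non-empty finite sets of them. Probabilistic/possibilistic empirical models and the actions $\mathrm{Emp}$, $\mathrm{Emp}_{\mathbb B}$: for deterministic $f$, $(\mathrm{Emp}(f)e)_\sigma$ is the push-forward (resp. $(\mathrm{Emp}_{\mathbb B}(f)e)_\sigma$ the image) of $e_{\pi_f(\sigma)}$ along $s\mapsto(\alpha_{f,x}(s|_{\pi_f(x)}))_{x\in\sigma}$, extended by convex combination (resp. contextwise union); possibilistic models are ordered by contextwise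 inclusion. $\triangle$ has measurements $a,b,c$, each with outcomes $\{0,1\}$, and contexts all subsets of size at most $2$. $\square$ has measurements $p,q,r,u$, each with outcomes $\{0,1\}$, and maximal contexts $\{p,q\},\{q,r\},\{r,u\},\{u,p\}$ (so contexts are these, their subsets). The probabilistic model $e$ on $\triangle$ has $e_{\{a,b\}}$ uniform on $\{(0,1),(1,0)\}$, $e_{\{b,c\}}$ uniform on $\{(0,0),(1,1)\}$, $e_{\{a,c\}}$ uniform on $\{(0,0),(1,1)\}$, with uniform marginals on singletons; the possibilistic $e$ is its collection of supports. *)

From mathcomp Require Import all_boot all_order all_algebra.
From mathcomp Require Import reals.
From Stdlib Require List.
Set Implicit Arguments. Unset Strict Implicit. Unset Printing Implicit Defensive.
Import Order.TTheory GRing.Theory Num.Theory.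
Local Open Scope ring_scope.

(* Measurement scenarios with all outcome sets equal to {0,1} = bool
   (this covers both scenarios of the theorem).  A scenario is a finite type
   X of measurements together with a predicate Sigma on {set X} (contexts).

   An element of E(U) (a section / assignment on U) is represented as a
   finite function s : X -> option bool which is defined (Some _) exactly
   on U. *)

Definition section (X : finType) := {ffun X -> option bool}.

Definition is_sec (X : finType) (U : {set X}) (s : section X) : bool :=
  [forall x, (s x != None) == (x \in U)].

Definition restr (X : finType) (U : {set X}) (s : section X) : section X :=
  [ffun x => if x \in U then s x else None].

Definition poss_model (X : finType) (Sigma : pred {set X})
    (d : {set X} -> {set section X}) : Prop :=
  (forall sg, Sigma sg -> d sg != set0 /\ (forall s, s \in d sg -> is_sec sg s)) /\
  (forall sg tau, Sigma sg -> Sigma tau -> tau \subset sg ->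
      d tau = restr tau @: d sg).

Definition prob_model (R : realType) (X : finType) (Sigma : pred {set X})
    (d : {set X} -> section X -> R) : Prop :=
  (forall sg, Sigma sg ->
     [/\ forall s, 0 <= d sg s,
         forall s, ~~ is_sec sg s -> d sg s = 0
       & \sum_(s : section X) d sg s = 1]) /\
  (forall sg tau, Sigma sg -> Sigma tau -> tau \subset sg ->
     forall t, d tau t = \sum_(s : section X | restr tau s == t) d sg s).

(* Deterministic procedure f : S -> T (S on XS, T on XT):
   pi_f is a relation XT x XS, given by x |-> pi_f(x) ;
   alpha_{f,x} : E_S(pi_f(x)) -> bool, applied to restrictions to pi_f(x). *)
Record detproc (XS XT : finType) := DetProc {
  dp_pi : XT -> {set XS};
  dp_alpha : XT -> section XS -> bool }.

Definition pi_img (XS XT : finType) (f : detproc XS XT) (sg : {set XT}) : {set XS} :=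
  \bigcup_(x in sg) dp_pi f x.

Definition valid_dp (XS XT : finType) (SigS : pred {set XS}) (SigT : pred {set XT})
    (f : detproc XS XT) : Prop :=
  forall sg, SigT sg -> SigS (pi_img f sg).

Definition dp_out (XS XT : finType) (f : detproc XS XT) (sg : {set XT})
    (s : section XS) : section XT :=
  [ffun x => if x \in sg then Some (dp_alpha f x (restr (dp_pi f x) s)) else None].

Definition EmpB_det (XS XT : finType) (f : detproc XS XT)
    (d : {set XS} -> {set section XS}) (sg : {set XT}) : {set section XT} :=
  [set dp_out f sg s | s in d (pi_img f sg)].

(* Possibilistic procedure = non-empty finite set (list) of deterministic ones;
   action = contextwise union. *)
Definition EmpB (XS XT : finType) (F : seq (detproc XS XT))
    (d : {set XS} -> {set section XS}) (sg : {set XT}) : {set section XT} :=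
  \bigcup_(f <- F) EmpB_det f d sg.

Definition poss_proc (XS XT : finType) (SigS : pred {set XS}) (SigT : pred {set XT})
    (F : seq (detproc XS XT)) : Prop :=
  (0 < size F)%N /\ (forall f, List.In f F -> valid_dp SigS SigT f).

Definition Emp_det (R : realType) (XS XT : finType) (f : detproc XS XT)
    (d : {set XS} -> section XS -> R) (sg : {set XT}) (t : section XT) : R :=
  \sum_(s : section XS | dp_out f sg s == t) d (pi_img f sg) s.

(* Probabilistic procedure = finitely supported distribution on deterministic
   ones, given as a finite list of (weight, procedure); action = convex
   combination. *)
Definition Emp (R : realType) (XS XT : finType) (P : seq (R * detproc XS XT))
    (d : {set XS} -> section XS -> R) (sg : {set XT}) (t : section XT) : R :=
  \sum_(p <- P) p.1 * Emp_det p.2 d sg t.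

Definition prob_proc (R : realType) (XS XT : finType) (SigS : pred {set XS})
    (SigT : pred {set XT}) (P : seq (R * detproc XS XT)) : Prop :=
  [/\ forall p, List.In p P -> 0 <= p.1,
      \sum_(p <- P) p.1 = 1
    & forall p, List.In p P -> valid_dp SigS SigT p.2].

Definition ta : 'I_3 := @Ordinal 3 0 isT.
Definition tb : 'I_3 := @Ordinal 3 1 isT.
Definition tc : 'I_3 := @Ordinal 3 2 isT.
Definition tri_ctx : pred {set 'I_3} := fun sg => (#|sg| <= 2)%N.

Definition sp : 'I_4 := @Ordinal 4 0 isT.
Definition sq : 'I_4 := @Ordinal 4 1 isT.
Definition sr : 'I_4 := @Ordinal 4 2 isT.
Definition su : 'I_4 := @Ordinal 4 3 isT.
Definition sq_ctx : pred {set 'I_4} := fun sg =>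
  [|| sg \subset [set sp; sq], sg \subset [set sq; sr],
      sg \subset [set sr; su] | sg \subset [set su; sp]].

Definition e_poss (sg : {set 'I_3}) : {set section 'I_3} :=
  [set s | [&& is_sec sg s,
              (ta \in sg) && (tb \in sg) ==> (s ta != s tb),
              (tb \in sg) && (tc \in sg) ==> (s tb == s tc) &
              (ta \in sg) && (tc \in sg) ==> (s ta == s tc)]].

Definition e_prob (R : realType) (sg : {set 'I_3}) (s : section 'I_3) : R :=
  if s \in e_poss sg then (#|e_poss sg|%:R)^-1 else 0.

From mathcomp Require Import all_boot all_order all_algebra.
From mathcomp Require Import reals.
Set Implicit Arguments. Unset Strict Implicit. Unset Printing Implicit Defensive.
Import Order.TTheory GRing.Theory Num.Theory.
Local Open Scope ring_scope.

(* Let f : square -> triangle be a valid deterministic procedure and write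
   U = pi_f(a) u pi_f(b) u pi_f(c).  The square is a flag complex: its
   non-faces are generated by the two diagonals {p,r} and {q,u}, so a set
   whose pairwise unions are contexts is itself a context.  As every pair
   {x,y} of triangle measurements is a context, pi_f({x,y}) = pi_f(x) u pi_f(y)
   is a square context, hence so is U.  A section s of d over U therefore
   yields, by restriction to pi_f(sg) and compatibility of d, an outcome of
   Emp(f)d on every triangle context sg, and all of these outcomes come from
   the single global assignment x |-> alpha_{f,x}(s|pi_f(x)).  If they were all
   in the support of e, that assignment would satisfy a <> b, b = c, a = c,
   which is impossible.  Possibilistically s is any element of the non-empty
   set d(U); probabilistically we pick a procedure of positive weight and a
   section of positive mass, and positivity propagates to Emp(P)d. *)

(* Generic facts about sums over lists of nonnegative terms, whose elements
   (weighted procedures) do not form an eqType. *)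
Section NonnegativeListSums.
Variables (T : Type) (R : numDomainType).

Lemma sum_list_ge0 (g : T -> R) (r : seq T) :
  (forall y, List.In y r -> 0 <= g y) -> 0 <= \sum_(y <- r) g y.
Proof.
elim: r => [|y r IHr] g_ge0; first by rewrite big_nil.
rewrite big_cons addr_ge0 ?g_ge0 //=; first by left.
by apply: IHr => z zr; apply: g_ge0; right.
Qed.

Lemma sum_list_ge_term (g : T -> R) (r : seq T) (x : T) :
  (forall y, List.In y r -> 0 <= g y) -> List.In x r -> g x <= \sum_(y <- r) g y.
Proof.
elim: r => [|y r IHr] g_ge0 //= xr.
have g_ge0_r z : List.In z r -> 0 <= g z by move=> zr; apply: g_ge0; right.
rewrite big_cons; case: xr => [<-|xr].
- by rewrite lerDl sum_list_ge0.
- by rewrite (le_trans (IHr g_ge0_r xr)) // lerDr g_ge0 //; left.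
Qed.

Lemma sum_list_pos_term (g : T -> R) (r : seq T) :
  (forall y, List.In y r -> 0 <= g y) -> \sum_(y <- r) g y != 0 ->
  exists2 x, List.In x r & 0 < g x.
Proof.
elim: r => [|y r IHr] g_ge0; first by rewrite big_nil eqxx.
rewrite big_cons => sum_neq0.
have gy_ge0 : 0 <= g y by apply: g_ge0; left.
have [gy_gt0|] := boolP (0 < g y); first by exists y => //; left.
rewrite lt_def gy_ge0 andbT negbK => /eqP gy0.
have [|x xr gx_gt0] := IHr (fun z zr => g_ge0 z (or_intror zr)).
  by rewrite gy0 add0r in sum_neq0.
by exists x => //; right.
Qed.

End NonnegativeListSums.

Lemma restr_restr (X : finType) (A B : {set X}) (s : section X) :
  A \subset B -> restr A (restr B s) = restr A s.
Proof.
by move=> AB; apply/ffunP => x; rewrite !ffunE; case: ifP => // /(subsetP AB) ->.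
Qed.

Lemma dp_out_restr (XS XT : finType) (f : detproc XS XT) (sg : {set XT})
    (s : section XS) :
  dp_out f sg (restr (pi_img f sg) s) = dp_out f sg s.
Proof.
apply/ffunP => x; rewrite !ffunE; case: ifP => // x_sg.
by rewrite restr_restr //; apply: bigcup_sup x_sg.
Qed.

Lemma pi_img_set1 (XS XT : finType) (f : detproc XS XT) (x : XT) :
  pi_img f [set x] = dp_pi f x.
Proof. by rewrite /pi_img big_set1. Qed.

Lemma pi_imgU (XS XT : finType) (f : detproc XS XT) (A B : {set XT}) :
  pi_img f (A :|: B) = pi_img f A :|: pi_img f B.
Proof. exact: bigcup_setU. Qed.

Lemma pi_imgS (XS XT : finType) (f : detproc XS XT) (A B : {set XT}) :
  A \subset B -> pi_img f A \subset pi_img f B.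
Proof.
by move=> AB; apply/bigcupsP => x xA; apply: bigcup_sup (subsetP AB x xA).
Qed.

Lemma poss_model_restr (X : finType) (Sigma : pred {set X})
    (d : {set X} -> {set section X}) (U V : {set X}) (s : section X) :
  poss_model Sigma d -> Sigma U -> Sigma V -> V \subset U ->
  s \in d U -> restr V s \in d V.
Proof. by move=> [_ d_comp] U_ctx V_ctx VU sU; rewrite (d_comp U V) // imset_f. Qed.

Section ProbabilisticModels.
Variables (R : realType) (X : finType) (Sigma : pred {set X}).
Variable d : {set X} -> section X -> R.
Hypothesis d_model : prob_model Sigma d.

Lemma prob_model_ge0 (U : {set X}) : Sigma U -> forall s, 0 <= d U s.
Proof. by move=> U_ctx; have [d_ge0 _ _] := d_model.1 U U_ctx. Qed.

Lemma prob_model_restr_ge (U V : {set X}) :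
  Sigma U -> Sigma V -> V \subset U -> forall s, d U s <= d V (restr V s).
Proof.
move=> U_ctx V_ctx VU s; rewrite (d_model.2 U V) // (bigD1 s) //= lerDl.
by apply: sumr_ge0 => t _; apply: prob_model_ge0.
Qed.

Lemma prob_model_pos (U : {set X}) : Sigma U -> exists s, 0 < d U s.
Proof.
move=> U_ctx; have [_ _ d_sum1] := d_model.1 U U_ctx.
have : \sum_(s : section X) d U s != 0 by rewrite d_sum1 oner_eq0.
rewrite psumr_neq0 => [/hasP[s _ /= s_pos]|s _]; first by exists s.
exact: prob_model_ge0.
Qed.

End ProbabilisticModels.

Lemma Emp_det_ge (R : realType) (XS XT : finType) (f : detproc XS XT)
    (d : {set XS} -> section XS -> R) (sg : {set XT}) (s : section XS) :
  (forall t, 0 <= d (pi_img f sg) t) ->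
  d (pi_img f sg) s <= Emp_det f d sg (dp_out f sg s).
Proof.
move=> d_ge0; rewrite /Emp_det (bigD1 s) //= lerDl.
by apply: sumr_ge0 => t _; apply: d_ge0.
Qed.

Lemma Emp_ge (R : realType) (XS XT : finType) (P : seq (R * detproc XS XT))
    (d : {set XS} -> section XS -> R) (sg : {set XT}) (t : section XT)
    (p : R * detproc XS XT) :
  (forall q, List.In q P -> 0 <= q.1 * Emp_det q.2 d sg t) ->
  List.In p P -> p.1 * Emp_det p.2 d sg t <= Emp P d sg t.
Proof. exact: (sum_list_ge_term (g := fun q => q.1 * Emp_det q.2 d sg t)). Qed.

Lemma subset_pairC (T : finType) (X : {set T}) (a b c d : T) :
  [set a; b] = ~: [set c; d] -> (X \subset [set a; b]) = (c \notin X) && (d \notin X).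
Proof. by move=> ->; rewrite subsetC subUset !sub1set !inE. Qed.

Lemma sq_ctx_diagonals (X : {set 'I_4}) :
  sq_ctx X = ~~ ((sp \in X) && (sr \in X)) && ~~ ((sq \in X) && (su \in X)).
Proof.
have pqC : [set sp; sq] = ~: [set sr; su] by apply/setP => -[[|[|[|[|//]]]] ?]; rewrite !inE.
have qrC : [set sq; sr] = ~: [set su; sp] by apply/setP => -[[|[|[|[|//]]]] ?]; rewrite !inE.
have ruC : [set sr; su] = ~: [set sp; sq] by apply/setP => -[[|[|[|[|//]]]] ?]; rewrite !inE.
have upC : [set su; sp] = ~: [set sq; sr] by apply/setP => -[[|[|[|[|//]]]] ?]; rewrite !inE.
rewrite /sq_ctx (subset_pairC X pqC) (subset_pairC X qrC) (subset_pairC X ruC).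
rewrite (subset_pairC X upC).
by case: (sp \in X); case: (sq \in X); case: (sr \in X); case: (su \in X).
Qed.

Lemma pair_notin_union3 (T : finType) (A B C : {set T}) (x y : T) :
  ~~ ((x \in A :|: B) && (y \in A :|: B)) -> ~~ ((x \in B :|: C) && (y \in B :|: C)) ->
  ~~ ((x \in A :|: C) && (y \in A :|: C)) ->
  ~~ ((x \in A :|: B :|: C) && (y \in A :|: B :|: C)).
Proof.
rewrite !inE.
by case: (x \in A); case: (x \in B); case: (x \in C);
   case: (y \in A); case: (y \in B); case: (y \in C).
Qed.

Lemma sq_ctx_flag (A B C : {set 'I_4}) :
  sq_ctx (A :|: B) -> sq_ctx (B :|: C) -> sq_ctx (A :|: C) ->
  sq_ctx (A :|: B :|: C).
Proof.
rewrite !sq_ctx_diagonals => /andP[AB_pr AB_qu] /andP[BC_pr BC_qu] /andP[AC_pr AC_qu].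
by rewrite !pair_notin_union3.
Qed.

Lemma tri_ctx_pair (x y : 'I_3) : tri_ctx [set x; y].
Proof. by rewrite /tri_ctx cards2; case: (x != y). Qed.

Lemma valid_dp_total_ctx (f : detproc 'I_4 'I_3) :
  valid_dp sq_ctx tri_ctx f -> sq_ctx (pi_img f [set: 'I_3]).
Proof.
move=> f_valid; have pair_ctx x y := f_valid _ (tri_ctx_pair x y).
have -> : [set: 'I_3] = [set ta; tb; tc].
  by apply/setP => -[[|[|[|//]]] ?]; rewrite !inE.
rewrite !pi_imgU !pi_img_set1; apply: sq_ctx_flag.
- by have := pair_ctx ta tb; rewrite pi_imgU !pi_img_set1.
- by have := pair_ctx tb tc; rewrite pi_imgU !pi_img_set1.
- by have := pair_ctx ta tc; rewrite pi_imgU !pi_img_set1.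
Qed.

(* Contextuality of e: no single input s produces, on every triangle context,
   an output in the support of e (it would give a <> b, b = c and a = c). *)
Lemma e_poss_no_global_output (XS : finType) (f : detproc XS 'I_3)
    (s : section XS) :
  ~ (forall sg, tri_ctx sg -> dp_out f sg s \in e_poss sg).
Proof.
move=> out_in_e.
have := out_in_e _ (tri_ctx_pair ta tb); have := out_in_e _ (tri_ctx_pair tb tc).
have := out_in_e _ (tri_ctx_pair ta tc).
rewrite /e_poss !inE !ffunE !inE /= => /andP[_ /eqP ac] /and3P[_ /eqP bc _] /and3P[_ ab _].
by move: ab; rewrite ac bc eqxx.
Qed.

Lemma e_prob_pos_supp (R : realType) (sg : {set 'I_3}) (t : section 'I_3) :
  0 < e_prob R sg t -> t \in e_poss sg.
Proof. by rewrite /e_prob; case: ifP => //; rewrite ltxx. Qed.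

(* Possibilistic half: a possible section over pi_f(all of the triangle)
   would be mapped into the support of e on every triangle context. *)
Lemma no_possibilistic_simulation :
  ~ exists (d : {set 'I_4} -> {set section 'I_4}) (F : seq (detproc 'I_4 'I_3)),
      [/\ poss_model sq_ctx d, poss_proc sq_ctx tri_ctx F
        & forall sg, tri_ctx sg -> EmpB F d sg \subset e_poss sg].
Proof.
move=> [d [[|f F] [d_model [//= _ F_valid] F_sub]]].
have f_valid : valid_dp sq_ctx tri_ctx f by apply: F_valid; left.
have U_ctx := valid_dp_total_ctx f_valid.
have /set0Pn[s sU] := (d_model.1 _ U_ctx).1.
apply: (@e_poss_no_global_output _ f s) => sg sg_ctx.
have sV := poss_model_restr d_model U_ctx (f_valid sg sg_ctx)
             (pi_imgS f (subsetT sg)) sU.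
rewrite -dp_out_restr; apply: (subsetP (F_sub sg sg_ctx)).
by rewrite /EmpB big_cons inE imset_f.
Qed.

(* Probabilistic half: a section of positive mass, pushed through a procedure
   of positive weight, gets positive probability on every triangle context. *)
Lemma no_probabilistic_simulation (R : realType) :
  ~ exists (d : {set 'I_4} -> section 'I_4 -> R) (P : seq (R * detproc 'I_4 'I_3)),
      [/\ prob_model sq_ctx d, prob_proc sq_ctx tri_ctx P
        & forall sg, tri_ctx sg -> forall t, Emp P d sg t = e_prob R sg t].
Proof.
move=> [d [P [d_model [w_ge0 w_sum1 P_valid] Emp_e]]].
have [[w f] /= pf w_pos] : exists2 p, List.In p P & 0 < p.1.
  by apply: sum_list_pos_term => //; rewrite w_sum1 oner_eq0.
have f_valid : valid_dp sq_ctx tri_ctx f := P_valid _ pf.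
have U_ctx := valid_dp_total_ctx f_valid.
have [s s_pos] := prob_model_pos d_model U_ctx.
apply: (@e_poss_no_global_output _ f s) => sg sg_ctx.
set V := pi_img f sg; set t := dp_out f sg s.
have V_ctx : sq_ctx V := f_valid sg sg_ctx.
have Emp_det_ge0 (g : detproc 'I_4 'I_3) u : valid_dp sq_ctx tri_ctx g ->
    0 <= Emp_det g d sg u.
  move=> g_valid; apply: sumr_ge0 => v _.
  exact (prob_model_ge0 d_model (g_valid sg sg_ctx) v).
have mass_restr : d (pi_img f [set: 'I_3]) s <= d V (restr V s) :=
  prob_model_restr_ge d_model U_ctx V_ctx (pi_imgS f (subsetT sg)) s.
have mass_out : d V (restr V s) <= Emp_det f d sg t.
  rewrite /t -dp_out_restr; apply: Emp_det_ge => u.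
  exact (prob_model_ge0 d_model V_ctx u).
have mass_mix : w * Emp_det f d sg t <= Emp P d sg t.
  apply: (Emp_ge _ pf) => q Pq.
  by apply: mulr_ge0; [exact: w_ge0 | exact/Emp_det_ge0/P_valid].
apply: (@e_prob_pos_supp R); rewrite -Emp_e //; apply: lt_le_trans mass_mix.
by rewrite mulr_gt0 // (lt_le_trans s_pos) // (le_trans mass_restr).
Qed.

Theorem mainTheorem14 (R : realType) :
  (~ exists (d : {set 'I_4} -> {set section 'I_4}) (F : seq (detproc 'I_4 'I_3)),
       [/\ poss_model sq_ctx d, poss_proc sq_ctx tri_ctx F
         & forall sg, tri_ctx sg -> EmpB F d sg \subset e_poss sg]) /\
  (~ exists (d : {set 'I_4} -> section 'I_4 -> R) (P : seq (R * detproc 'I_4 'I_3)),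
       [/\ prob_model sq_ctx d, prob_proc sq_ctx tri_ctx P
         & forall sg, tri_ctx sg -> forall t, Emp P d sg t = e_prob R sg t]).
Proof. by split; [exact: no_possibilistic_simulation | exact: no_probabilistic_simulation]. Qed.
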